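(* For all runtime type environments $\Delta$ and $\Delta'$ such that the disjoint union $\Delta, \Delta'$ is defined: if $\mathsf{safe}(\Delta, \Delta')$, then $\mathsf{safe}(\Delta)$.
   Context: Session types: $S ::= \oplus\mathtt{p}\{\ell_i(A_i).S_i\}_{i\in I} \mid \&\mathtt{p}\{\ell_i(A_i).S_i\}_{i\in I} \mid \mu X.S \mid X \mid \mathsf{end}$, where $\mathtt{p},\mathtt{q}$ range over roles, $\ell$ over message labels and $A$ over payload types (compared by syntactic equality). Recursive session types are treated equi-recursively. Queue types are $Q ::= \epsilon \mid (\mathtt{p}\to\mathtt{q} : \ell(A))\cdot Q$, identified up to the congruence $\equiv$ that swaps two adjacent entries $(\mathtt{p}_1\to\mathtt{q}_1:\ell_1(A_1))$ and $(\mathtt{p}_2\to\mathtt{q}_2:\ell_2(A_2))$ whenever $\mathtt{p}_1\neq\mathtt{p}_2$ or $\mathtt{q}_1\neq\mathtt{q}_2$. A runtime type environment $\Delta$ is a finite collection of entries of the forms: actor name $a$; access point name $p$; polarised initialisation token $\iota^{+}:S$ or $\iota^{-}:S$; session endpoint $s[\mathtt{p}]:S$; session queue $s:Q$; each entry's subject occurs at most once, and $\Delta_1,\Delta_2$ denotes disjoint union (defined only when the subjects are disjoint). The congruence $\equiv$ on queue types extends to environments. Labelled transitions on environments ($j\in I$ where applicable): (Send) $\Delta, s[\mathtt{p}]:\oplus\mathtt{q}\{\ell_i(A_i).S_i\}_{i\in I}, s:Q \to \Delta, s[\mathtt{p}]:S_j, s:Q\cdot(\mathtt{p}\to\mathtt{q}:\ell_j(A_j))$;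 (Recv) $\Delta, s[\mathtt{p}]:\&\mathtt{q}\{\ell_i(A_i).S_i\}_{i\in I}, s:(\mathtt{q}\to\mathtt{p}:\ell_j(A_j))\cdot Q \to \Delta, s[\mathtt{p}]:S_j, s:Q$; (End) $\Delta, s[\mathtt{p}]:\mathsf{end} \to \Delta$; (Rec) $\Delta, s[\mathtt{p}]:\mu X.S \to \Delta'$ whenever $\Delta, s[\mathtt{p}]:S\{\mu X.S/X\}\to\Delta'$. Write $\Delta \Longrightarrow \Delta'$ if $\Delta\equiv\Delta_1\to\Delta_2\equiv\Delta'$ for some $\Delta_1,\Delta_2$. The predicate $\mathsf{safe}$ is the largest predicate on environments such that $\mathsf{safe}(\Delta)$ implies: (i) if $\Delta=\Delta_0, s[\mathtt{p}]:\&\mathtt{q}\{\ell_i(A_i).S_i\}_{i\in I}, s:Q$ with $Q\equiv(\mathtt{q}\to\mathtt{p}:\ell_j(B_j))\cdot Q'$, then $j\in I$ and $B_j=A_j$; (ii) if $\Delta=\Delta_0, s[\mathtt{p}]:\mu X.S$ then $\mathsf{safe}(\Delta_0, s[\mathtt{p}]:S\{\mu X.S/X\})$; (iii) if $\Delta\Longrightarrow\Delta'$ then $\mathsf{safe}(\Delta')$. *)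

From Stdlib Require Import List Arith Relations Permutation.
Import ListNotations.

(* Names: roles, labels, payload types, actor names, access point names,
   initialisation tokens and session names are drawn from nat
   (payload types are compared by syntactic equality). *)
Definition role := nat.
Definition label := nat.
Definition ptype := nat.
Definition actor_name := nat.
Definition ap_name := nat.
Definition token := nat.
Definition session := nat.

(* Session types, recursion variables as de Bruijn indices:
   Rec S binds index 0 in S (mu X.S), Var n is a recursion variable. *)
Inductive sty : Type :=
| Sel (q : role) (br : list (label * ptype * sty))
| Bra (q : role) (br : list (label * ptype * sty))
| Rec (S : sty)
| Var (n : nat)
| End.

Fixpoint lift (c : nat) (S : sty) : sty :=
  match S with
  | Sel q br => Sel q (map (fun b => (fst b, lift c (snd b))) br)
  | Bra q br => Bra q (map (fun b => (fst b, lift c (snd b))) br)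
  | Rec S' => Rec (lift (Datatypes.S c) S')
  | Var n => if n <? c then Var n else Var (Datatypes.S n)
  | End => End
  end.

Fixpoint subst (k : nat) (U : sty) (S : sty) : sty :=
  match S with
  | Sel q br => Sel q (map (fun b => (fst b, subst k U (snd b))) br)
  | Bra q br => Bra q (map (fun b => (fst b, subst k U (snd b))) br)
  | Rec S' => Rec (subst (Datatypes.S k) (lift 0 U) S')
  | Var n => if n <? k then Var n
             else if n =? k then U else Var (pred n)
  | End => End
  end.

Definition unfold (S : sty) : sty := subst 0 (Rec S) S.

Record msg : Type := Msg { m_from : role; m_to : role; m_lab : label; m_pay : ptype }.
Definition queue := list msg.

Inductive qswap : queue -> queue -> Prop :=
| qswap_here (m1 m2 : msg) (Q : queue) :
    (m_from m1 <> m_from m2 \/ m_to m1 <> m_to m2) ->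
    qswap (m1 :: m2 :: Q) (m2 :: m1 :: Q)
| qswap_cons (m : msg) (Q Q' : queue) :
    qswap Q Q' -> qswap (m :: Q) (m :: Q').

Definition qequiv : queue -> queue -> Prop := clos_refl_sym_trans queue qswap.

Inductive polarity : Type := Plus | Minus.

Inductive entry : Type :=
| EActor (a : actor_name)
| EAP (x : ap_name)
| EToken (i : token) (pol : polarity) (S : sty)
| EEp (s : session) (p : role) (S : sty)
| EQueue (s : session) (Q : queue).

Inductive subject : Type :=
| SubActor (a : actor_name)
| SubAP (x : ap_name)
| SubToken (i : token) (pol : polarity)
| SubEp (s : session) (p : role)
| SubQueue (s : session).

Definition subj (e : entry) : subject :=
  match e with
  | EActor a => SubActor a
  | EAP x => SubAP x
  | EToken i pol _ => SubToken i pol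
  | EEp s p _ => SubEp s p
  | EQueue s _ => SubQueue s
  end.

(* Environments: finite collections of entries, represented by lists and
   identified up to permutation; "Delta1, Delta2" is list concatenation,
   defined only when all subjects are distinct. *)
Definition env := list entry.

Definition env_wf (D : env) : Prop := NoDup (map subj D).

Definition env_union_defined (D1 D2 : env) : Prop := env_wf (D1 ++ D2).

(* The congruence on environments: identity of collections (permutation)
   plus the queue congruence on queue entries. *)
Definition entry_equiv (e e' : entry) : Prop :=
  e = e' \/ exists s Q Q', e = EQueue s Q /\ e' = EQueue s Q' /\ qequiv Q Q'.

Definition env_equiv (D D' : env) : Prop :=
  exists D'', Forall2 entry_equiv D D'' /\ Permutation D'' D'.

(* Transitions on environments (entries are matched up to permutation). *)
Inductive step : env -> env -> Prop :=
| step_perm (D D1 D2 D' : env) :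
    Permutation D D1 -> step D1 D2 -> Permutation D2 D' -> step D D'
| step_send (D : env) (s : session) (p q : role)
    (br : list (label * ptype * sty)) (Q : queue) (l : label) (A : ptype) (S : sty) :
    In (l, A, S) br ->
    step (EEp s p (Sel q br) :: EQueue s Q :: D)
         (EEp s p S :: EQueue s (Q ++ [Msg p q l A]) :: D)
| step_recv (D : env) (s : session) (p q : role)
    (br : list (label * ptype * sty)) (Q : queue) (l : label) (A : ptype) (S : sty) :
    In (l, A, S) br ->
    step (EEp s p (Bra q br) :: EQueue s (Msg q p l A :: Q) :: D)
         (EEp s p S :: EQueue s Q :: D)
| step_end (D : env) (s : session) (p : role) :
    step (EEp s p End :: D) D
| step_rec (D D' : env) (s : session) (p : role) (S : sty) :
    step (EEp s p (unfold S) :: D) D' ->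
    step (EEp s p (Rec S) :: D) D'.

Definition wstep (D D' : env) : Prop :=
  exists D1 D2, env_equiv D D1 /\ step D1 D2 /\ env_equiv D2 D'.

CoInductive safe : env -> Prop :=
| safe_intro (D : env) :
    (forall (D0 : env) (s : session) (p q : role)
            (br : list (label * ptype * sty)) (Q Q' : queue) (l : label) (B : ptype),
        Permutation D (EEp s p (Bra q br) :: EQueue s Q :: D0) ->
        qequiv Q (Msg q p l B :: Q') ->
        exists S, In (l, B, S) br) ->
    (forall (D0 : env) (s : session) (p : role) (S : sty),
        Permutation D (EEp s p (Rec S) :: D0) ->
        safe (EEp s p (unfold S) :: D0)) ->
    (forall D' : env, wstep D D' -> safe D') ->
    safe D.

From Stdlib Require Import List Arith Relations Permutation.
Import ListNotations.

(* Every clause of [safe] inspects entries picked out of the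
   environment up to permutation, and every transition of [D] is also a
   transition of [D ++ D'] that leaves the frame [D'] untouched.  Hence
   "[D ++ D'] is safe for some [D']" is a post-fixed point of the clauses
   defining [safe], and coinduction concludes. *)

Lemma step_app_tail (D1 D2 D' : env) : step D1 D2 -> step (D1 ++ D') (D2 ++ D').
Proof.
  induction 1; simpl.
  - eapply step_perm; [apply Permutation_app_tail; eassumption | eassumption |
      apply Permutation_app_tail; eassumption].
  - now apply step_send.
  - now apply step_recv.
  - apply step_end.
  - now apply step_rec.
Qed.

Lemma Forall2_entry_equiv_refl (D : env) : Forall2 entry_equiv D D.
Proof.
  induction D; constructor; [now left | assumption].
Qed.

Lemma env_equiv_app_tail (D1 D2 D' : env) :
  env_equiv D1 D2 -> env_equiv (D1 ++ D') (D2 ++ D').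
Proof.
  intros [D'' [Hequiv Hperm]].
  exists (D'' ++ D'); split.
  - apply Forall2_app; [assumption | apply Forall2_entry_equiv_refl].
  - now apply Permutation_app_tail.
Qed.

Lemma wstep_app_tail (D1 D2 D' : env) : wstep D1 D2 -> wstep (D1 ++ D') (D2 ++ D').
Proof.
  intros [E1 [E2 [Hequiv1 [Hstep Hequiv2]]]].
  exists (E1 ++ D'), (E2 ++ D').
  auto using env_equiv_app_tail, step_app_tail.
Qed.

Lemma safe_app_l : forall D D' : env, safe (D ++ D') -> safe D.
Proof.
  cofix safe_app_l; intros D D' Hsafe.
  inversion Hsafe as [DD' Hlabels Hunfold Hsteps HDD']; subst DD'.
  constructor.
  - intros D0 s p q br Q Q' l B Hperm Hqueue.
    exact (Hlabels (D0 ++ D') s p q br Q Q' l B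
             (Permutation_app_tail D' Hperm) Hqueue).
  - intros D0 s p S Hperm.
    apply (safe_app_l _ D').
    exact (Hunfold (D0 ++ D') s p S (Permutation_app_tail D' Hperm)).
  - intros D2 Hwstep.
    apply (safe_app_l _ D').
    exact (Hsteps _ (wstep_app_tail D D2 D' Hwstep)).
Qed.

Theorem lemmaB6 : forall (D D' : env),
  env_union_defined D D' -> safe (D ++ D') -> safe D.
Proof.
  intros D D' _.
  apply safe_app_l.
Qed.
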